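(* Let $R$ be a left Noetherian ring and $A$ any left $R$-module. Then $A$ is isomorphic to the inverse limit of a countable inverse system (indexed by the finite subsets of a countably infinite set, ordered by inclusion) of injective left $R$-modules whose connecting homomorphisms are all one-to-one.
   Context: Rings are associative with unit, modules are unital. *)

From HB Require Import structures.
From mathcomp Require Import all_boot all_order all_algebra.
Set Implicit Arguments. Unset Strict Implicit. Unset Printing Implicit Defensive.
Import GRing.Theory.
Local Open Scope ring_scope.

Definition left_ideal (R : pzRingType) (I : R -> Prop) : Prop :=
  [/\ I 0, (forall x y, I x -> I y -> I (x + y)) & (forall r x, I x -> I (r * x))].

Definition left_noetherian (R : pzRingType) : Prop :=
  forall I : nat -> R -> Prop,
    (forall n, left_ideal (I n)) ->
    (forall n x, I n x -> I n.+1 x) ->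
    exists N, forall n x, (N <= n)%N -> I n x -> I N x.

Definition injective_module (R : pzRingType) (M : lmodType R) : Prop :=
  forall (X Y : lmodType R) (f : {linear X -> Y}) (g : {linear X -> M}),
    injective f -> exists h : {linear Y -> M}, forall x, h (f x) = g x.

(* Finite subsets of the countably infinite set nat, represented canonically
   as strictly increasing lists. *)
Definition finsub : Type := {s : seq nat | sorted ltn s}.

Definition finsub_le (S T : finsub) : bool := all (fun x => x \in val T) (val S).

Definition inverse_system (R : pzRingType) (M : finsub -> lmodType R)
  (p : forall S T : finsub, finsub_le S T -> {linear M T -> M S}) : Prop :=
  (forall S (h : finsub_le S S) x, p S S h x = x) /\
  (forall S T U (hST : finsub_le S T) (hTU : finsub_le T U) (hSU : finsub_le S U) x,
      p S T hST (p T U hTU x) = p S U hSU x).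

(* A is isomorphic to the inverse limit lim M = { compatible threads
   (x_S) in prod_S M S }: there are linear maps phi_S : A -> M S compatible
   with the system such that the induced linear map A -> lim M is bijective. *)
Definition is_inverse_limit (R : pzRingType) (A : lmodType R)
  (M : finsub -> lmodType R)
  (p : forall S T : finsub, finsub_le S T -> {linear M T -> M S}) : Prop :=
  exists phi : forall S, {linear A -> M S},
    [/\ (forall S T (h : finsub_le S T) a, p S T h (phi T a) = phi S a),
        (forall a b, (forall S, phi S a = phi S b) -> a = b) &
        (forall x : forall S, M S,
            (forall S T (h : finsub_le S T), p S T h (x T) = x S) ->
            exists a, forall S, phi S a = x S)].

From HB Require Import structures.
From mathcomp Require Import all_boot all_order all_algebra.
From mathcomp Require Import boolp classical_sets functions.
Set Implicit Arguments. Unset Strict Implicit. Unset Printing Implicit Defensive.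
Import Order.TTheory GRing.Theory Num.Theory.
Local Open Scope classical_set_scope.
Local Open Scope ring_scope.

(* Embed A into an injective module E0 and E0 / A into an injective module E1; both
   are products of copies of the character module Hom_Z(R, Q/Z), injective by Baer's
   criterion. This gives an exact sequence 0 -> A -> E0 -f-> E1. Over a left Noetherian
   ring the countable direct sum of copies of E1 is injective, hence so is
   G = E0 (+) (+)_n E1. Every module of the system is G, and the map attached to S <= T
   is the shift by d = |T| - |S|, sending (y, z) to (y, (f y, ..., f y, z_0, z_1, ...))
   with d copies of f y in front. Shifts are injective and compose additively. A point
   (y, z) in the image of every shift has z_n = f y for all n, so finiteness of support
   forces f y = 0 and z = 0, i.e. the point is (a, 0) with a in A: the inverse limit
   is A. *)

(** * Baer's criterion *)

Section PartialLinear.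
Variables (R : pzRingType) (Y E : lmodType R).

Definition submodule (P : set Y) :=
  [/\ P 0, forall x y, P x -> P y -> P (x + y) & forall r x, P x -> P (r *: x)].

Definition linear_on (P : set Y) (g : Y -> E) :=
  (forall x y, P x -> P y -> g (x + y) = g x + g y) /\
  (forall r x, P x -> g (r *: x) = r *: g x).

Definition add_line (P : set Y) (y0 : Y) := [set y | exists q r, P q /\ y = q + r *: y0].

Lemma submoduleN P x : submodule P -> P x -> P (- x).
Proof. by case=> _ _ PZ Px; rewrite -scaleN1r; apply: PZ. Qed.

Lemma linear_onB P g x z : submodule P -> linear_on P g -> P x -> P z ->
  g (x - z) = g x - g z.
Proof.
move=> sP [gD gZ] Px Pz; rewrite gD //; last exact: submoduleN.
by rewrite -scaleN1r gZ // scaleN1r.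
Qed.

Lemma linear_on0 P : linear_on P (fun _ => 0).
Proof. by split=> *; rewrite ?addr0 ?scaler0. Qed.

Lemma submodule0 : submodule [set 0].
Proof. by split=> [|_ _ -> ->|r _ ->]; rewrite ?addr0 ?scaler0. Qed.

Lemma submodule_image (X : lmodType R) (f : {linear X -> Y}) :
  submodule [set y | exists x, f x = y].
Proof.
split; first by exists 0; rewrite linear0.
- by move=> _ _ [x <-] [z <-]; exists (x + z); rewrite linearD.
- by move=> r _ [x <-]; exists (r *: x); rewrite linearZ.
Qed.

Lemma submodule_add_line P y0 : submodule P -> submodule (add_line P y0).
Proof.
case=> P0 PD PZ; split.
- by exists 0, 0; rewrite scale0r addr0.
- move=> _ _ [q [r [Pq ->]]] [q' [r' [Pq' ->]]].
  by exists (q + q'), (r + r'); rewrite scalerDl addrACA; split => //; apply: PD.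
- move=> s _ [q [r [Pq ->]]].
  by exists (s *: q), (s * r); rewrite scalerDr scalerA; split => //; apply: PZ.
Qed.

Lemma extend_line P h y0 (e : E) : submodule P -> linear_on P h ->
  (forall r, P (r *: y0) -> h (r *: y0) = r *: e) ->
  exists2 h', linear_on (add_line P y0) h' &
    forall q r, P q -> h' (q + r *: y0) = h q + r *: e.
Proof.
move=> sP hP he; have [_ PD PZ] := sP; have [hD hZ] := hP.
have wd q r q' r' : P q -> P q' -> q + r *: y0 = q' + r' *: y0 ->
    h q + r *: e = h q' + r' *: e.
  move=> Pq Pq' eqy.
  have dy : (r - r') *: y0 = q' - q.
    by rewrite scalerBl -(addKr q (r *: y0)) eqy addrA addrK addrC.
  have := he (r - r'); rewrite dy (linear_onB sP hP) //.
  move=> /(_ (PD _ _ Pq' (submoduleN sP Pq))).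
  by move=> /(canRL (subrK (h q))) ->; rewrite scalerBl addrAC subrK addrC.
pose h' y := if pselect (exists qr : Y * R, P qr.1 /\ y = qr.1 + qr.2 *: y0) is left H
  then let qr := projT1 (cid H) in h qr.1 + qr.2 *: e else 0.
have h'E q r : P q -> h' (q + r *: y0) = h q + r *: e.
  move=> Pq; rewrite /h'; case: pselect => [H|[]]; last by exists (q, r).
  by case: (cid H) => -[q' r'] /= [Pq' eqy]; apply: wd.
exists h' => //; split.
- move=> _ _ [q [r [Pq ->]]] [q' [r' [Pq' ->]]].
  rewrite addrACA -scalerDl !h'E ?hD ?scalerDl 1?addrACA //; exact: PD.
- move=> s _ [q [r [Pq ->]]].
  by rewrite scalerDr scalerA !h'E ?hZ ?scalerDr ?scalerA //; apply: PZ.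
Qed.

End PartialLinear.

Definition baer (R : pzRingType) (E : lmodType R) :=
  forall (I : R -> Prop) (phi : R -> E), left_ideal I ->
    (forall x y, I x -> I y -> phi (x + y) = phi x + phi y) ->
    (forall r x, I x -> phi (r * x) = r *: phi x) ->
  exists e, forall x, I x -> phi x = x *: e.

Section BaerExtension.
Variables (R : pzRingType) (Y E : lmodType R).
Hypothesis baerE : baer E.
Variables (P : set Y) (g : Y -> E).
Hypotheses (sP : submodule P) (gP : linear_on P g).

Record partial_ext := PartialExt {
  pdom : set Y;
  pmap : Y -> E;
  pdom_submodule : submodule pdom;
  pdom_sup : P `<=` pdom;
  pmap_linear : linear_on pdom pmap;
  pmap_ext : forall y, P y -> pmap y = g y }.

Definition pext_le (a b : partial_ext) :=
  pdom a `<=` pdom b /\ forall y, pdom a y -> pmap a y = pmap b y.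

Definition pext0 := PartialExt sP (@subset_refl _ P) gP (fun _ _ => erefl).

Lemma pext0_le a : pext_le pext0 a.
Proof. by split => [|y Py /=]; [exact: pdom_sup | rewrite pmap_ext]. Qed.

Lemma pext_le_trans a b c : pext_le a b -> pext_le b c -> pext_le a c.
Proof.
move=> [ab eab] [bc ebc]; split => [y /ab /bc //|y ay].
by rewrite eab // ebc //; apply: ab.
Qed.

(* Chains are required to contain pext0 so that the union of their domains is never
   empty. *)
Lemma pext_chain_ub (A : set partial_ext) : A pext0 -> total_on A pext_le ->
  exists u, forall a, A a -> pext_le a u.
Proof.
move=> A0 totA.
pose D := [set y | exists a, A a /\ pdom a y].
have common y z : D y -> D z -> exists a, [/\ A a, pdom a y & pdom a z].
  move=> [a [Aa ay]] [b [Ab bz]].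
  by case: (totA a b Aa Ab) => [[ab _]|[ba _]]; [exists b; split => //; apply: ab
                                               | exists a; split => //; apply: ba].
pose h y := if pselect (exists a, A a /\ pdom a y) is left H
  then pmap (projT1 (cid H)) y else 0.
have hE a y : A a -> pdom a y -> h y = pmap a y.
  move=> Aa ay; rewrite /h; case: pselect => [H|[]]; last by exists a.
  case: (cid H) => b /= [Ab by_].
  by case: (totA a b Aa Ab) => [[_ ->]|[_ ->]].
have sD : submodule D.
  split; first by exists pext0; split => //; case: sP.
  - move=> y z Dy Dz; have [a [Aa ay az]] := common y z Dy Dz.
    by exists a; split => //; case: (pdom_submodule a) => _ + _; apply.
  - move=> r y [a [Aa ay]].
    by exists a; split => //; case: (pdom_submodule a) => _ _; apply.
have hD : linear_on D h.
  split.
  - move=> y z Dy Dz; have [a [Aa ay az]] := common y z Dy Dz.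
    have [_ aD _] := pdom_submodule a; have [pD _] := pmap_linear a.
    by rewrite !(hE a) //; [apply: pD | apply: aD].
  - move=> r y [a [Aa ay]].
    have [_ _ aZ] := pdom_submodule a; have [_ pZ] := pmap_linear a.
    by rewrite !(hE a) //; [apply: pZ | apply: aZ].
have PD : P `<=` D by move=> y Py; exists pext0.
have hg y : P y -> h y = g y by move=> Py; rewrite (hE pext0).
exists (PartialExt sD PD hD hg) => a Aa; split => [y ay|y ay /=]; last by rewrite (hE a).
by exists a.
Qed.

Lemma pext_maximal_total (m : partial_ext) :
  (forall a, pext_le m a -> pext_le a m) -> pdom m = setT.
Proof.
move=> mmax; apply/seteqP; split => // y0 _.
have [Q0 QD QZ] := pdom_submodule m.
pose I r := pdom m (r *: y0).
have idI : left_ideal I.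
  split; first by rewrite /I scale0r.
  - by move=> r s Ir Is; rewrite /I scalerDl; apply: QD.
  - by move=> r s Is; rewrite /I -scalerA; apply: QZ.
have [hD hZ] := pmap_linear m.
have [e he] : exists e, forall r, I r -> pmap m (r *: y0) = r *: e.
  apply: (baerE (phi := fun r => pmap m (r *: y0)) idI) => [r s Ir Is|r s Is].
    by rewrite scalerDl hD.
  by rewrite -scalerA hZ.
have [h' h'lin h'E] := extend_line (pdom_submodule m) (pmap_linear m) he.
have mh' q : pdom m q -> h' q = pmap m q.
  by move=> mq; have := h'E q 0 mq; rewrite !scale0r !addr0.
have Qline : pdom m `<=` add_line (pdom m) y0.
  by move=> q mq; exists q, 0; rewrite scale0r addr0.
have h'g y : P y -> h' y = g y.
  by move=> Py; rewrite mh' ?pmap_ext //; apply: pdom_sup.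
have [le _] := mmax (PartialExt (submodule_add_line y0 (pdom_submodule m))
  (subset_trans (@pdom_sup m) Qline) h'lin h'g) (conj Qline (fun q mq => esym (mh' q mq))).
by apply: le; exists 0, 1; rewrite add0r scale1r.
Qed.

Lemma baer_extend : exists h : {linear Y -> E}, forall y, P y -> h y = g y.
Proof.
have [|a b c|A totA|m mmax] := @ZL_preorder _ pext0 (fun a b => `[< pext_le a b >]).
- by move=> a; apply/asboolP; split.
- by move=> /asboolP ab /asboolP bc; apply/asboolP; apply: pext_le_trans ab bc.
- have [||u ub] := @pext_chain_ub (A `|` [set pext0]).
  + by right.
  + move=> a b [Aa|->] [Ab|->]; try by [left; apply: pext0_le | right; apply: pext0_le].
    by case: (totA a b Aa Ab) => /asboolP; [left | right].
  + by exists u => a Aa; apply/asboolP; apply: ub; left.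
have domT := pext_maximal_total (fun a ma => asboolW (mmax a (asboolT ma))).
have [hD hZ] := pmap_linear m; rewrite domT in hD hZ.
have hlin : linear (pmap m) by move=> r y z; rewrite hD // hZ.
pose h : {linear Y -> E} := HB.pack (pmap m) (GRing.isLinear.Build _ _ _ _ _ hlin).
by exists h; apply: pmap_ext.
Qed.

End BaerExtension.

Lemma baer_injective (R : pzRingType) (E : lmodType R) : baer E -> injective_module E.
Proof.
move=> baerE X Y f g finj.
pose g' y := if pselect (exists x, f x = y) is left H then g (projT1 (cid H)) else 0.
have g'E x : g' (f x) = g x.
  rewrite /g'; case: pselect => [H|[]]; last by exists x.
  by case: (cid H) => x' /= /finj ->.
have g'lin : linear_on [set y | exists x, f x = y] g'.
  split => [_ _ [x <-] [z <-]|r _ [x <-]]; first by rewrite -linearD !g'E linearD.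
  by rewrite -linearZ !g'E linearZ.
have [h hg'] := baer_extend baerE (submodule_image f) g'lin.
by exists h => x; rewrite hg' ?g'E //; exists x.
Qed.

(** * The divisible group Q/Z and the character module *)

Lemma int_ideal_dvd (J : int -> Prop) : left_ideal J ->
  exists k : int, forall n, J n <-> (k %| n)%Z.
Proof.
move=> [J0 JD JM].
have Jdvd k n : J k -> (k %| n)%Z -> J n by move=> Jk /dvdzP[q ->]; apply: JM.
have Jabs n : J n -> J `|n|%N.
  by case: n => // n /(JM (-1)); rewrite NegzE mulN1r opprK.
have [exJ|noJ] := pselect (exists m : nat, (0 < m)%N && `[< J m >]); last first.
  exists 0 => n; rewrite dvd0z; split => [Jn|/eqP -> //].
  apply/negPn/negP => n0; apply: noJ; exists `|n|%N.
  by rewrite absz_gt0 n0; apply/asboolP; apply: Jabs.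
case: (ex_minnP exJ) => k /andP[k0 /asboolP Jk] kmin.
exists k => n; split => [Jn|]; last exact: Jdvd.
have kz : k%:Z != 0 by rewrite eqz_nat -lt0n.
have Jr : J `|(n %% k)%Z|%N.
  apply: Jabs; have -> : (n %% k)%Z = n + (- (n %/ k)%Z) * k.
    by rewrite mulNr {2}(divz_eq n k) addrAC subrr add0r.
  exact/JD/JM.
apply/dvdz_mod0P/eqP; rewrite -absz_eq0; apply: contraT; rewrite -lt0n => r0.
have := kmin _ (introT andP (conj r0 (asboolT Jr))).
rewrite leqNgt -ltz_nat gez0_abs ?modz_ge0 //.
by rewrite ltz_pmod // ltz_nat.
Qed.

Definition frac (q : rat) : rat := q - (Num.floor q)%:~R.

Lemma fracDz q (z : int) : frac (q + z%:~R) = frac q.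
Proof.
by rewrite /frac floorDrz ?intrKfloor ?rpred_int // intrD opprD addrACA subrr addr0.
Qed.

Lemma frac_floor0 q : Num.floor q = 0 -> frac q = q.
Proof. by move=> q0; rewrite /frac q0 subr0. Qed.

Lemma floor_frac q : Num.floor (frac q) = 0.
Proof. by rewrite /frac -mulrNz floorDrz ?rpred_int // intrKfloor subrr. Qed.

Lemma fracDl q q' : frac (frac q + q') = frac (q + q').
Proof.
have -> : frac q + q' = q + q' + (- Num.floor q)%:~R by rewrite mulrNz addrAC.
exact: fracDz.
Qed.

(* Q/Z, represented by the fractional parts in [0, 1). *)
Definition QZ := {q : rat | Num.floor q == 0}.
HB.instance Definition _ := Choice.on QZ.

Definition QZpi (q : rat) : QZ := exist _ (frac q) (introT eqP (floor_frac q)).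

Lemma QZpiK : cancel val QZpi.
Proof. by move=> a; apply: val_inj; rewrite /= frac_floor0 //; apply/eqP/(valP a). Qed.

Lemma QZpi_frac q q' : frac q = frac q' -> QZpi q = QZpi q'.
Proof. by move=> e; apply: val_inj. Qed.

Definition QZadd (a b : QZ) := QZpi (val a + val b).
Definition QZopp (a : QZ) := QZpi (- val a).

Lemma QZpiD q q' : QZpi (q + q') = QZadd (QZpi q) (QZpi q').
Proof.
apply: QZpi_frac; change (frac (q + q') = frac (frac q + frac q')).
by rewrite fracDl [q + frac q']addrC fracDl addrC.
Qed.

Lemma QZpiN q : QZpi (- q) = QZopp (QZpi q).
Proof.
apply: QZpi_frac; change (frac (- q) = frac (- frac q)).
have -> : - frac q = - q + (Num.floor q)%:~R by rewrite opprB addrC.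
by rewrite fracDz.
Qed.

Lemma QZaddA : associative QZadd.
Proof. by move=> a b c; rewrite -[a]QZpiK -[b]QZpiK -[c]QZpiK -!QZpiD addrA. Qed.
Lemma QZaddC : commutative QZadd.
Proof. by move=> a b; rewrite /QZadd addrC. Qed.
Lemma QZadd0 : left_id (QZpi 0) QZadd.
Proof. by move=> a; rewrite -[a]QZpiK -QZpiD add0r. Qed.
Lemma QZaddN : left_inverse (QZpi 0) QZopp QZadd.
Proof. by move=> a; rewrite -[a]QZpiK -QZpiN -QZpiD addNr. Qed.

HB.instance Definition _ := GRing.isZmodule.Build QZ QZaddA QZaddC QZadd0 QZaddN.

Lemma QZpi_is_zmod_morphism : zmod_morphism QZpi.
Proof. by move=> q q'; rewrite QZpiD QZpiN. Qed.
HB.instance Definition _ := GRing.isZmodMorphism.Build rat QZ QZpi QZpi_is_zmod_morphism.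

Lemma QZpi_int (z : int) : QZpi z%:~R = 0.
Proof. by apply: QZpi_frac; have := fracDz 0 z; rewrite add0r. Qed.

Lemma QZpi_neq0 q : 0 < q < 1 -> QZpi q != 0.
Proof.
move=> /andP[q0 q1].
have fl0 : Num.floor q = 0 by apply: floor_def; rewrite add0r (ltW q0) q1.
apply/eqP => /(congr1 val) /=; rewrite frac_floor0 // frac_floor0 ?floor0 // => q_eq0.
by move: q0; rewrite q_eq0 ltxx.
Qed.

Lemma QZ_divisible (a : QZ) (n : int) : n != 0 -> exists b : QZ, b *~ n = a.
Proof.
move=> n0; exists (QZpi (val a / n%:~R)).
by rewrite -raddfMz -mulrzr mulfVK ?intr_eq0 //; exact: QZpiK.
Qed.

Lemma QZ_baer : baer (zmodule QZ).
Proof.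
move=> I phi idI phiD phiM; have [k Ik] := int_ideal_dvd idI.
have [k0|k0] := eqVneq k 0.
  exists 0 => x /Ik; rewrite k0 dvd0z => /eqP ->; have [I0 _ _] := idI.
  by have := phiM 0 0 I0; rewrite mul0r scale0r scaler0.
have [e ke] := QZ_divisible (phi k) k0.
exists e => x /Ik /dvdzP[q ->].
by rewrite phiM; [rewrite -ke -scalerA | apply/Ik/dvdzz].
Qed.

Lemma QZ_separates (X : zmodType) (P : set (zmodule X)) (x : zmodule X) :
  submodule P -> ~ P x ->
  exists h : {linear zmodule X -> zmodule QZ}, (forall p, P p -> h p = 0) /\ h x != 0.
Proof.
move=> sP Px; have [P0 PD PZ] := sP.
have [k Jk] : exists k : int, forall n, P (n *: x) <-> (k %| n)%Z.
  apply: int_ideal_dvd; split; first by rewrite scale0r.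
  - by move=> m n Pm Pn; rewrite scalerDl; apply: PD.
  - by move=> m n Pn; rewrite -scalerA; apply: PZ.
(* The n with n x in P are the multiples of c (or of any c when there are none but 0),
   so 1/c mod Z is killed by them but is not 0. *)
pose c : int := if k == 0 then 2 else `|k|%N.
have c1 : 1 < c.
  rewrite /c; case: eqP => // /eqP k0; rewrite ltz_nat ltn_neqAle absz_gt0 k0 andbT.
  by apply/eqP => k1; apply: Px; rewrite -[x]scale1r; apply/Jk; rewrite dvdzE -k1.
have kc n : (k %| n)%Z -> (c %| n)%Z.
  by rewrite /c; case: eqP => [->|_]; rewrite ?dvd0z ?dvdzE // => /eqP ->.
pose e : zmodule QZ := QZpi (c%:~R^-1).
have eJ n : P (n *: x) -> n *: e = 0.
  have c0 : c%:~R != 0 :> rat by rewrite intr_eq0 gt_eqF // (lt_trans _ c1).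
  move=> /Jk /kc /dvdzP[q ->]; rewrite scalezrE -raddfMz -mulrzr intrM.
  by rewrite mulrCA mulVf // mulr1; apply: QZpi_int.
have [h hlin hE] := extend_line sP (linear_on0 _ _) (fun n Pn => esym (eJ n Pn)).
have [g gh] := baer_extend QZ_baer (submodule_add_line x sP) hlin.
exists g; split => [p Pp|].
  rewrite gh; last by exists p, 0; rewrite scale0r addr0.
  by have := hE p 0 Pp; rewrite !scale0r !addr0.
rewrite gh; last by exists 0, 1; rewrite add0r scale1r.
have := hE 0 1 P0; rewrite add0r scale1r => ->; rewrite add0r scale1r.
apply: QZpi_neq0; rewrite invr_gt0 ltr0z (lt_trans _ c1) //=.
by rewrite invf_lt1 ?ltr0z ?(lt_trans _ c1) // ltr1z.
Qed.

Lemma nmod_morphismP (U V : zmodType) (f : U -> V) :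
  {morph f : x y / x + y} -> nmod_morphism f.
Proof. by move=> fD; split => //; apply: (@addrI _ (f 0)); rewrite -fD !addr0. Qed.

(* The character module Hom_Z(R, Q/Z), with (r f)(s) = f (s r). *)
Section Character.
Variable R : pzRingType.

Record chr := Chr {
  chr_val :> R -> QZ;
  chr_valD : forall a b, chr_val (a + b) = chr_val a + chr_val b }.

HB.instance Definition _ := gen_eqMixin chr.
HB.instance Definition _ := gen_choiceMixin chr.
HB.instance Definition _ (f : chr) :=
  GRing.isNmodMorphism.Build R QZ f (nmod_morphismP (@chr_valD f)).

Lemma chr_ext (f g : chr) : f =1 g -> f = g.
Proof.
case: f g => f fD [g gD] /= /funext fg; subst g.
by congr Chr; apply: Prop_irrelevance.
Qed.

Fact chr_add_subproof (f g : chr) a b :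
  f (a + b) + g (a + b) = (f a + g a) + (f b + g b).
Proof. by rewrite !raddfD addrACA. Qed.
Fact chr_opp_subproof (f : chr) a b : - f (a + b) = - f a + - f b.
Proof. by rewrite raddfD opprD. Qed.
Fact chr_zero_subproof (a b : R) : 0 = 0 + 0 :> QZ.
Proof. by rewrite addr0. Qed.
Fact chr_scale_subproof r (f : chr) a b : f ((a + b) * r) = f (a * r) + f (b * r).
Proof. by rewrite mulrDl raddfD. Qed.

Definition chr_add f g := Chr (chr_add_subproof f g).
Definition chr_opp f := Chr (chr_opp_subproof f).
Definition chr_zero := Chr chr_zero_subproof.
Definition chr_scale r f := Chr (chr_scale_subproof r f).

Lemma chr_addA : associative chr_add.
Proof. by move=> f g h; apply: chr_ext => s /=; rewrite addrA. Qed.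
Lemma chr_addC : commutative chr_add.
Proof. by move=> f g; apply: chr_ext => s /=; rewrite addrC. Qed.
Lemma chr_add0 : left_id chr_zero chr_add.
Proof. by move=> f; apply: chr_ext => s /=; rewrite add0r. Qed.
Lemma chr_addN : left_inverse chr_zero chr_opp chr_add.
Proof. by move=> f; apply: chr_ext => s /=; rewrite addNr. Qed.
HB.instance Definition _ := GRing.isZmodule.Build chr chr_addA chr_addC chr_add0 chr_addN.

Lemma chr_scaleA a b f : chr_scale a (chr_scale b f) = chr_scale (a * b) f.
Proof. by apply: chr_ext => s /=; rewrite mulrA. Qed.
Lemma chr_scale1 : left_id 1 chr_scale.
Proof. by move=> f; apply: chr_ext => s /=; rewrite mulr1. Qed.
Lemma chr_scaleDr : right_distributive chr_scale +%R.
Proof. by move=> r f g; apply: chr_ext. Qed.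
Lemma chr_scaleDl f : {morph chr_scale^~ f : a b / a + b}.
Proof. by move=> a b; apply: chr_ext => s /=; rewrite mulrDr raddfD. Qed.
HB.instance Definition _ :=
  GRing.Zmodule_isLmodule.Build R chr chr_scaleA chr_scale1 chr_scaleDr chr_scaleDl.

Lemma chr_baer : baer chr.
Proof.
move=> I Phi idI PhiD PhiM; have [I0 ID IM] := idI.
have sI : submodule (I : set (zmodule R)).
  by split => // n x Ix; rewrite scalezrE -mulrzl; apply: IM.
have psiI : linear_on (I : set (zmodule R)) (fun x => Phi x 1 : zmodule QZ).
  split => [x y Ix Iy|n x Ix]; first by rewrite PhiD.
  rewrite !scalezrE -mulrzl PhiM //; change (Phi x (1 * n%:~R) = Phi x 1 *~ n).
  by rewrite mul1r -raddfMz.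
have [Psi Psi_ext] := baer_extend QZ_baer sI psiI.
exists (@Chr Psi (raddfD Psi)) => x Ix; apply: chr_ext => s /=.
rewrite Psi_ext ?PhiM //; last exact: IM.
by change (Phi x s = Phi x (1 * s)); rewrite mul1r.
Qed.

Lemma chr_separates (X : lmodType R) (P : set X) x : submodule P -> ~ P x ->
  exists h : {linear X -> chr}, (forall p, P p -> h p = 0) /\ h x != 0.
Proof.
move=> sP Px; have [P0 PD PZ] := sP.
have sPz : submodule (P : set (zmodule X)).
  by split => // n y Py; rewrite scalezrE -scaler_int; apply: PZ.
have [g [gP gx]] := QZ_separates sPz Px.
have hD (y : X) (a b : R) : g ((a + b) *: y) = g (a *: y) + g (b *: y) by rewrite scalerDl raddfD.
pose h y := @Chr (fun s => g (s *: y)) (hD y).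
have hlin : linear h.
  by move=> r y z; apply: chr_ext => s /=; rewrite scalerDr scalerA raddfD.
pose hl : {linear X -> chr} := HB.pack h (GRing.isLinear.Build _ _ _ _ _ hlin).
exists hl; split => [p Pp|].
  by apply: chr_ext => s /=; rewrite gP //; apply: PZ.
by apply: contra_neq gx => /(congr1 (fun f : chr => f 1)) /=; rewrite scale1r.
Qed.

End Character.

Section BaerProducts.
Variable R : pzRingType.

Lemma baer_fun (J : Type) (M : lmodType R) : baer M -> baer (J -> M).
Proof.
move=> baerM I Phi idI PhiD PhiM.
have ex j : exists e, forall x, I x -> Phi x j = x *: e.
  apply: (baerM _ (fun r => Phi r j) idI) => [x y Ix Iy|r x Ix].
    by rewrite PhiD.
  by rewrite PhiM.
exists (fun j => projT1 (cid (ex j))) => x Ix; apply/funext => j.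
by rewrite (projT2 (cid (ex j))).
Qed.

Lemma baer_pair (M1 M2 : lmodType R) : baer M1 -> baer M2 -> baer (M1 * M2)%type.
Proof.
move=> baer1 baer2 I Phi idI PhiD PhiM.
have [e1 h1] := baer1 _ (fun r => (Phi r).1) idI
  (fun x y Ix Iy => congr1 fst (PhiD x y Ix Iy)) (fun r x Ix => congr1 fst (PhiM r x Ix)).
have [e2 h2] := baer2 _ (fun r => (Phi r).2) idI
  (fun x y Ix Iy => congr1 snd (PhiD x y Ix Iy)) (fun r x Ix => congr1 snd (PhiM r x Ix)).
by exists (e1, e2) => x Ix; rewrite [Phi x]surjective_pairing h1 // h2.
Qed.

Lemma baer_cogenerator (X : lmodType R) (P : set X) : submodule P ->
  exists (E : lmodType R) (f : {linear X -> E}), baer E /\ forall x, f x = 0 <-> P x.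
Proof.
move=> sP.
pose J := {h : {linear X -> chr R} | forall p, P p -> h p = 0}.
pose f (x : X) : J -> chr R := fun h => sval h x.
have flin : linear f by move=> r x y; apply/funext => h; rewrite /f linearP.
pose fl : {linear X -> J -> chr R} := HB.pack f (GRing.isLinear.Build _ _ _ _ _ flin).
exists (J -> chr R)%type, fl.
split; first exact/baer_fun/chr_baer.
move=> x /=; split => [fx0|Px]; last by apply/funext => -[h hP]; rewrite /f hP.
apply: contrapT => Px; have [h [hP hx]] := chr_separates sP Px.
by move: hx; rewrite -[h x]/(f x (exist _ h hP)) fx0 eqxx.
Qed.

End BaerProducts.

(** * Direct sums over a left Noetherian ring *)

Section DirectSum.
Variables (R : pzRingType) (M : lmodType R).

Definition finsupp : {pred nat -> M} :=
  fun f => `[< exists N, forall n, (N <= n)%N -> f n = 0 >].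

Lemma finsuppP (f : nat -> M) :
  reflect (exists N, forall n, (N <= n)%N -> f n = 0) (f \in finsupp).
Proof. exact: asboolP. Qed.

Lemma finsupp_submod_closed : subsemimod_closed finsupp.
Proof.
split; [split|].
- by apply/finsuppP; exists 0%N.
- move=> f g /finsuppP[N fN] /finsuppP[N' gN']; apply/finsuppP; exists (maxn N N') => n.
  by rewrite geq_max => /andP[/fN fn0 /gN' gn0]; rewrite addrfctE fn0 gn0 addr0.
- move=> r f /finsuppP[N fN]; apply/finsuppP; exists N => n /fN fn0.
  by rewrite scalrfctE fn0 scaler0.
Qed.

HB.instance Definition _ :=
  GRing.isSubmodClosed.Build R (nat -> M) finsupp finsupp_submod_closed.

Record dsum := DSum { dsum_val :> nat -> M; _ : dsum_val \in finsupp }.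
HB.instance Definition _ := [isSub for dsum_val].
HB.instance Definition _ := [Choice of dsum by <:].
HB.instance Definition _ := [SubChoice_isSubLmodule of dsum by <:].

Lemma dsum_finite (z : dsum) : exists N, forall n, (N <= n)%N -> z n = 0.
Proof. exact/finsuppP/valP. Qed.

Lemma dsum_ext (z z' : dsum) : z =1 z' -> z = z'.
Proof. by move=> zz'; apply/val_inj/funext. Qed.

Lemma dsumD (z z' : dsum) n : (z + z') n = z n + z' n.
Proof. by []. Qed.

Lemma dsumZ r (z : dsum) n : (r *: z) n = r *: z n.
Proof. by []. Qed.

Definition dsum_of (f : nat -> M) (fP : exists N, forall n, (N <= n)%N -> f n = 0) :=
  DSum (introT (finsuppP f) fP).

Hypothesis noeth : left_noetherian R.

Lemma noetherian_dsum_baer : baer M -> baer dsum.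
Proof.
move=> baerM I Phi idI PhiD PhiM; have [I0 ID IM] := idI.
have Phi0 : Phi 0 = 0 by have := PhiM 0 0 I0; rewrite mul0r scale0r.
pose In n x := I x /\ forall m, (n <= m)%N -> Phi x m = 0.
have idIn n : left_ideal (In n).
  split; first by split => // m _; rewrite Phi0.
  - move=> x y [Ix x0] [Iy y0]; split; first exact: ID.
    by move=> m nm; rewrite PhiD // dsumD x0 ?y0 ?addr0.
  - move=> r x [Ix x0]; split; first exact: IM.
    by move=> m nm; rewrite PhiM // dsumZ x0 ?scaler0.
(* The ideals of the x whose image is supported below n form an ascending chain; its
   stabilisation bounds the supports of all the Phi x at once. *)
have [N0 stable] := noeth idIn (fun n x '(conj Ix x0) => conj Ix (fun m nm => x0 m (ltnW nm))).
have supp x m : I x -> (N0 <= m)%N -> Phi x m = 0.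
  move=> Ix N0m; have [Nx xNx] := dsum_finite (Phi x).
  have [] := stable (maxn Nx N0) x (leq_maxr _ _); last by move=> _; apply.
  by split => // k; rewrite geq_max => /andP[/xNx].
have ex j : exists e, forall x, I x -> Phi x j = x *: e.
  apply: (baerM _ (fun r => Phi r j) idI) => [x y Ix Iy|r x Ix].
    by rewrite PhiD.
  by rewrite PhiM.
pose e j := if (j < N0)%N then projT1 (cid (ex j)) else 0.
have eN0 n : (N0 <= n)%N -> e n = 0 by rewrite /e leqNgt => /negbTE ->.
exists (dsum_of (ex_intro _ N0 eN0)) => x Ix; apply: dsum_ext => j.
rewrite dsumZ /= /e; case: ltnP => [_|N0j].
  by rewrite (projT2 (cid (ex j))).
by rewrite scaler0 supp.
Qed.

End DirectSum.

(** * The shift tower *)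

Section DsumShift.
Variables (R : pzRingType) (M : lmodType R).

Fact dsum_shift_subproof d (y : M) (z : dsum M) : exists N, forall n, (N <= n)%N ->
  (if (n < d)%N then y else z (n - d)%N) = 0.
Proof.
have [N zN] := dsum_finite z; exists (N + d)%N => n Nn.
have dn : (d <= n)%N by apply: leq_trans Nn; rewrite leq_addl.
by rewrite ltnNge dn /= zN // leq_subRL // addnC.
Qed.

Definition dsum_shift d y z : dsum M := dsum_of (dsum_shift_subproof d y z).

Lemma dsum_shiftE d y z n : dsum_shift d y z n = if (n < d)%N then y else z (n - d)%N.
Proof. by []. Qed.

Lemma dsum_shift0 y z : dsum_shift 0 y z = z.
Proof. by apply: dsum_ext => n; rewrite dsum_shiftE subn0. Qed.

Lemma dsum_shiftD d e y z : dsum_shift d y (dsum_shift e y z) = dsum_shift (d + e) y z.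
Proof.
apply: dsum_ext => n; rewrite !dsum_shiftE; case: (ltnP n d) => nd.
  by rewrite (leq_trans nd) // leq_addr.
by rewrite ltn_subLR // subnDA.
Qed.

Lemma dsum_shift_inj d y : injective (dsum_shift d y).
Proof.
move=> z z' zz'; apply: dsum_ext => n.
have := congr1 (fun w : dsum M => w (n + d)%N) zz'.
by rewrite !dsum_shiftE ltnNge leq_addl /= addnK.
Qed.

Lemma dsum_shift_linear d r y y' z z' :
  dsum_shift d (r *: y + y') (r *: z + z') = r *: dsum_shift d y z + dsum_shift d y' z'.
Proof. by apply: dsum_ext => n; rewrite dsumD dsumZ !dsum_shiftE; case: ifP. Qed.

End DsumShift.

Definition depth (S : finsub) : nat := size (val S).

Lemma depth_le S T : finsub_le S T -> (depth S <= depth T)%N.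
Proof.
move=> /allP ST; apply: uniq_leq_size => [|i /ST //].
exact: (sorted_uniq ltn_trans ltnn (valP S)).
Qed.

Definition finsub_iota (d : nat) : finsub := exist _ (iota 0 d) (iota_ltn_sorted 0 d).

Lemma depth_iota d : depth (finsub_iota d) = d.
Proof. exact: size_iota. Qed.

Definition finsub0 : finsub := finsub_iota 0.

Lemma finsub0_le S : finsub_le finsub0 S.
Proof. by []. Qed.

Section ShiftTower.
Variables (R : pzRingType) (A E0 E1 : lmodType R).
Variables (i0 : {linear A -> E0}) (f1 : {linear E0 -> E1}).
Hypothesis i0_inj : injective i0.
Hypothesis f1_ker : forall y, f1 y = 0 <-> exists a, i0 a = y.

Definition tower_space := (E0 * dsum E1)%type.
HB.instance Definition _ := GRing.Lmodule.on tower_space.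

Definition tshift d (u : tower_space) : tower_space := (u.1, dsum_shift d (f1 u.1) u.2).

Lemma tshift_is_linear d : linear (tshift d).
Proof. by move=> r u v; rewrite /tshift /= linearP dsum_shift_linear. Qed.
HB.instance Definition _ d :=
  GRing.isLinear.Build R tower_space tower_space _ (tshift d) (tshift_is_linear d).

Lemma tshift_snd d u n :
  (tshift d u).2 n = if (n < d)%N then f1 u.1 else u.2 (n - d)%N.
Proof. by []. Qed.

Lemma tshift0 u : tshift 0 u = u.
Proof. by case: u => y z; rewrite /tshift dsum_shift0. Qed.

Lemma tshiftD d e u : tshift d (tshift e u) = tshift (d + e) u.
Proof. by rewrite /tshift dsum_shiftD. Qed.

Lemma tshift_inj d : injective (tshift d).
Proof.
move=> [y z] [y' z'] e; have /= yy' := congr1 fst e; subst y'.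
by have /= /dsum_shift_inj -> := congr1 snd e.
Qed.

Definition tembed (a : A) : tower_space := (i0 a, 0).

Lemma tembed_is_linear : linear tembed.
Proof.
move=> r a b; rewrite /tembed linearP; congr pair.
by rewrite -[RHS]/(r *: 0 + 0) scaler0 addr0.
Qed.
HB.instance Definition _ :=
  GRing.isLinear.Build R A tower_space _ tembed tembed_is_linear.

Lemma tshift_tembed d a : tshift d (tembed a) = tembed a.
Proof.
have /f1_ker f1a0 : exists b, i0 b = i0 a by exists a.
congr pair; apply: dsum_ext => n; rewrite dsum_shiftE f1a0.
by case: ifP.
Qed.

Lemma tshift_all_images u : (forall d, exists v, u = tshift d v) -> exists a, u = tembed a.
Proof.
move=> uim; have head n : u.2 n = f1 u.1.
  by have [v ->] := uim n.+1; rewrite tshift_snd ltnSn.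
have [N uN] := dsum_finite u.2.
have f1u : f1 u.1 = 0 by rewrite -(head N) uN.
have [a ua] := (f1_ker u.1).1 f1u.
exists a; apply: injective_projections => /=; first by rewrite ua.
by apply: dsum_ext => n; rewrite head f1u.
Qed.

Definition tower (S T : finsub) (_ : finsub_le S T) : {linear tower_space -> tower_space} :=
  tshift (depth T - depth S).

Lemma tower_inverse_system : inverse_system tower.
Proof.
split=> [S h u|S T U hST hTU hSU u]; first by rewrite /= subnn tshift0.
rewrite /= tshiftD addnC addnBA ?depth_le // subnK //.
exact: depth_le.
Qed.

Lemma tower_limit : is_inverse_limit A tower.
Proof.
exists (fun _ => tembed); split.
- by move=> S T h a; apply: tshift_tembed.
- by move=> a b /(_ finsub0) [/i0_inj].
move=> x xcompat.
have x0S S : x finsub0 = tshift (depth S) (x S).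
  by rewrite -(xcompat _ _ (finsub0_le S)) /= subn0.
have [a xa] : exists a, x finsub0 = tembed a.
  apply: tshift_all_images => d; exists (x (finsub_iota d)).
  by rewrite (x0S (finsub_iota d)) depth_iota.
exists a => S; apply: (@tshift_inj (depth S)).
by rewrite -(x0S S) xa tshift_tembed.
Qed.

End ShiftTower.

Theorem mainTheorem3 (R : pzRingType) (A : lmodType R) :
  left_noetherian R ->
  exists (M : finsub -> lmodType R)
         (p : forall S T : finsub, finsub_le S T -> {linear M T -> M S}),
    [/\ inverse_system p,
        (forall S, injective_module (M S)),
        (forall S T (h : finsub_le S T), injective (p S T h)) &
        is_inverse_limit A p].
Proof.
move=> noeth.
have [E0 [i0 [baerE0 i0_ker]]] := baer_cogenerator (@submodule0 _ A).
have i0_inj : injective i0 by apply: raddf_inj => a /i0_ker.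
have [E1 [f1 [baerE1 f1_ker]]] := baer_cogenerator (submodule_image i0).
exists (fun _ => tower_space E0 E1 : lmodType R), (tower f1); split.
- exact: tower_inverse_system.
- by move=> _; apply/baer_injective/baer_pair => //; apply: noetherian_dsum_baer.
- by move=> S T h; apply: tshift_inj.
- exact: tower_limit i0_inj f1_ker.
Qed.
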